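(* Let $f:\mathbb{R}^n\times\mathbb{R}^m\to\mathbb{R}$ and $g:\mathbb{R}^n\times\mathbb{R}^m\to\mathbb{R}^p$ be continuous. Assume that for every $x\in\mathbb{R}^n$, $f(x,\cdot)$ is strictly convex, $g(x,\cdot)$ is convex (componentwise), and the problem $\min_{u\in\mathbb{R}^m} f(x,u)$ subject to $g(x,u)\le 0$ has at least one minimizer; let $u^*(x)$ denote the (unique) minimizer. Then, for $x_0\in\mathbb{R}^n$, $u^*$ is locally bounded at $x_0$ if and only if local compact feasibility holds at $x_0$.
   Context: Local compact feasibility (LCF) holds at $x\in\mathbb{R}^n$ if there exist a compact set $K\subset\mathbb{R}^m$ and $\delta>0$ such that for all $y\in\mathbb{R}^n$ with $\|y-x\|<\delta$ there exists $u\in K$ with $g(y,u)\le 0$. A function $\varphi:\mathbb{R}^n\to\mathbb{R}^q$ is locally bounded at $x_0$ if there are a neighborhood $\breve{\mathcal{U}}$ of $x_0$ and $B>0$ with $\|\varphi(x)\|\le B$ for all $x\in\breve{\mathcal{U}}$. *)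

(* R^k is 'rV[R]_k with its canonical (sup) norm
   and topology; all norms on R^k are equivalent, so local boundedness and
   LCF do not depend on the choice. *)
From HB Require Import structures.
From mathcomp Require Import all_boot all_order all_algebra.
From mathcomp Require Import all_classical all_reals all_analysis.
Set Implicit Arguments. Unset Strict Implicit. Unset Printing Implicit Defensive.
Import Order.TTheory GRing.Theory Num.Theory.
Import numFieldNormedType.Exports.
Local Open Scope classical_set_scope.
Local Open Scope ring_scope.

Definition convex_fun (R : realType) (m : nat) (h : 'rV[R]_m -> R) : Prop :=
  forall (u v : 'rV[R]_m) (t : R), 0 <= t -> t <= 1 ->
    h (t *: u + (1 - t) *: v) <= t * h u + (1 - t) * h v.

Definition strictly_convex_fun (R : realType) (m : nat) (h : 'rV[R]_m -> R) : Prop :=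
  forall (u v : 'rV[R]_m) (t : R), u != v -> 0 < t -> t < 1 ->
    h (t *: u + (1 - t) *: v) < t * h u + (1 - t) * h v.

Definition feasible (R : realType) (n m p : nat)
  (g : 'rV[R]_n -> 'rV[R]_m -> 'rV[R]_p) (y : 'rV[R]_n) (u : 'rV[R]_m) : Prop :=
  forall i : 'I_p, g y u 0 i <= 0.

Definition is_minimizer (R : realType) (n m p : nat)
  (f : 'rV[R]_n -> 'rV[R]_m -> R) (g : 'rV[R]_n -> 'rV[R]_m -> 'rV[R]_p)
  (x : 'rV[R]_n) (u : 'rV[R]_m) : Prop :=
  feasible g x u /\ forall w : 'rV[R]_m, feasible g x w -> f x u <= f x w.

Definition LCF (R : realType) (n m p : nat)
  (g : 'rV[R]_n -> 'rV[R]_m -> 'rV[R]_p) (x : 'rV[R]_n) : Prop :=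
  exists K : set 'rV[R]_m, compact K /\
  exists delta : R, 0 < delta /\
    forall y : 'rV[R]_n, `|y - x| < delta -> exists2 u, K u & feasible g y u.

Definition locally_bounded_at (R : realType) (n q : nat)
  (phi : 'rV[R]_n -> 'rV[R]_q) (x0 : 'rV[R]_n) : Prop :=
  exists U : set 'rV[R]_n, nbhs x0 U /\
  exists B : R, 0 < B /\ forall x, U x -> `|phi x| <= B.

From HB Require Import structures.
From mathcomp Require Import all_boot all_order all_algebra.
From mathcomp Require Import all_classical all_reals all_analysis.
From mathcomp Require Import lra.
Import Order.TTheory GRing.Theory Num.Theory.
Import numFieldNormedType.Exports.
Local Open Scope classical_set_scope.
Local Open Scope ring_scope.

(* If u* is bounded by B near x0, the closed ball of radius B witnesses LCF.
   Conversely, let K and delta witness LCF, and call (v, d) a descent step at y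
   when v and v + d are feasible for y and f(y, v + d) <= f(y, v).  Being
   strictly convex and minimized at u*(x0) on a closed convex set, f(x0, .)
   grows without bound on that set, so for r large there is no descent step of
   length r starting in K at x0.  Descent steps form a closed set, hence by the
   tube lemma over the compact set K x {|d| = r} there is none at y either, for
   y near x0.  Finally, if |u*(y) - v| > r for a v in K feasible for y, then by
   convexity the step from v of length r towards u*(y) is a descent step; so
   |u*(y)| <= r + max_K |.| near x0. *)

Section convexity.
Context {R : realType} {m : nat}.
Implicit Types (h : 'rV[R]_m -> R) (u v : 'rV[R]_m) (t : R).

Lemma convex_combE u v t : t *: u + (1 - t) *: v = v + t *: (u - v).
Proof. by rewrite scalerBl scale1r scalerBr addrCA. Qed.

Lemma strictly_convex_fun_convex {h} : strictly_convex_fun h -> convex_fun h.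
Proof.
move=> h_strict u v t t_ge0 t_le1.
have [->|uv] := eqVneq u v.
  by rewrite -scalerDl addrC subrK scale1r -mulrDl addrC subrK mul1r.
have [->|t_neq0] := eqVneq t 0.
  by rewrite scale0r add0r subr0 scale1r mul0r add0r mul1r.
have [->|t_neq1] := eqVneq t 1.
  by rewrite scale1r subrr scale0r addr0 mul1r mul0r addr0.
by apply/ltW/h_strict; rewrite // lt_neqAle ?t_neq1 // eq_sym t_neq0.
Qed.

Lemma convex_fun_segment {h} u v {t} : convex_fun h -> 0 <= t -> t <= 1 ->
  h (v + t *: (u - v)) <= h v + t * (h u - h v).
Proof.
move=> h_conv t_ge0 t_le1; rewrite -convex_combE.
by apply: le_trans (h_conv u v t t_ge0 t_le1) _; lra.
Qed.

End convexity.

Section topology.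
Context {R : realType}.

Lemma compact_norm_le m (c : R) : compact [set u : 'rV[R]_m | `|u| <= c].
Proof.
apply: bounded_closed_compact.
  exists c; split; first exact: num_real.
  by move=> M cM u /le_trans; apply; apply: ltW.
apply: (preimage_closed _ (@closed_le _ c)) => u _; exact: norm_continuous.
Qed.

Lemma compact_norm_eq m (c : R) : compact [set u : 'rV[R]_m | `|u| = c].
Proof.
apply: (subclosed_compact _ (compact_norm_le m c)); last by move=> u /= ->.
apply: (preimage_closed _ (@closed_eq _ c)) => u _; exact: norm_continuous.
Qed.

Lemma compact_norm_bound {V : normedModType R} {A : set V} : compact A ->
  exists2 B, 0 < B & forall x, A x -> `|x| <= B.
Proof.
move=> /compact_bounded A_bnd.
have [B [B_gt0 AB]] := filter_ex (filterI (nbhs_pinfty_gt (@real0 R)) A_bnd).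
by exists B.
Qed.

Lemma compact_gt_gap {T : topologicalType} {S : set T} (phi : T -> R) {a : R} :
  compact S -> continuous phi -> (forall x, S x -> a < phi x) ->
  exists2 eps, 0 < eps & forall x, S x -> a + eps < phi x.
Proof.
move=> S_compact phi_cont S_gt.
have : \forall eps \near 0^'+, S `<=` (fun x => a + eps < phi x).
  apply: (proj1 (compact_near_coveringP S) S_compact) => x Sx.
  have gap_gt0 : 0 < (phi x - a) / 2 by rewrite divr_gt0 // subr_gt0 S_gt.
  near=> x' eps.
  have : phi x - (phi x - a) / 2 < phi x'.
    by near: x'; apply: (cvgr_gt _ (phi_cont x)); rewrite ltrBlDr ltrDl.
  have : eps < (phi x - a) / 2 by near: eps; exact: nbhs_right_lt.
  rewrite /=; lra.
move=> near_gap; near (0 : R)^'+ => eps.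
exists eps; first by near: eps; exact: nbhs_right_gt.
by near: eps.
Unshelve. all: by end_near. Qed.

Lemma pair_continuous {T U : topologicalType} (a : T) :
  continuous (fun u : U => (a, u)).
Proof. by move=> u; apply: cvg_pair; [exact: cvg_cst | exact: cvg_id]. Qed.

Lemma tube_lemma {X Y : topologicalType} {Q : set X} {D : set (X * Y)} y0 :
  compact Q -> closed D -> (forall x, Q x -> ~ D (x, y0)) ->
  \forall y \near y0, forall x, Q x -> ~ D (x, y).
Proof.
move=> Q_compact D_closed Q_avoid.
have : \forall y \near y0, Q `<=` (fun x => ~ D (x, y)).
  apply: (proj1 (compact_near_coveringP Q) Q_compact) => x Qx.
  have : nbhs (x, y0) (~` D).
    by apply: open_nbhs_nbhs; split; [rewrite openC | exact: Q_avoid].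
  by apply: filterS => -[x' y].
by apply: filterS => y QD x /QD.
Qed.

End topology.

Section strictly_convex_minimum.
Context {R : realType} {m : nat}.
Variables (h : 'rV[R]_m -> R) (C : set 'rV[R]_m) (u0 : 'rV[R]_m).
Hypothesis h_strict : strictly_convex_fun h.
Hypothesis C_segment : forall u v t,
  C u -> C v -> 0 <= t -> t <= 1 -> C (v + t *: (u - v)).
Hypothesis C_u0 : C u0.
Hypothesis u0_min : forall w, C w -> h u0 <= h w.

Lemma strictly_convex_min_lt w : C w -> w != u0 -> h u0 < h w.
Proof.
move=> Cw w_neq.
have half_gt0 : (0 : R) < 2^-1 by rewrite invr_gt0 ltr0n.
have half_lt1 : (2^-1 : R) < 1 by rewrite invf_lt1 // ltr1n.
have := h_strict w u0 2^-1 w_neq half_gt0 half_lt1; rewrite convex_combE.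
have := u0_min _ (C_segment _ _ _ Cw C_u0 (ltW half_gt0) (ltW half_lt1)).
lra.
Qed.

Hypothesis h_cont : continuous h.
Hypothesis C_closed : closed C.

Lemma strictly_convex_min_coercive M :
  exists r, forall w, C w -> r <= `|w - u0| -> M < h w.
Proof.
have shift_cont : continuous (fun e => u0 + e).
  by move=> e; apply: continuousD; [exact: cst_continuous | exact: cvg_id].
(* On the compact set S of admissible unit directions h exceeds h u0 by some
   eps; convexity along rays turns this into growth of slope eps. *)
pose S := [set e | `|e| = 1] `&` [set e | C (u0 + e)].
have S_compact : compact S.
  apply: compact_closedI; first exact: compact_norm_eq.
  exact: (preimage_closed _ C_closed).
have S_gt : forall e, S e -> h u0 < (h \o (fun e => u0 + e)) e.
  move=> e [/= e_norm Ce]; apply: strictly_convex_min_lt => //.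
  by rewrite -subr_eq0 addrC addKr -normr_eq0 e_norm oner_neq0.
have h_shift_cont : continuous (h \o (fun e => u0 + e)).
  by move=> e; apply: continuous_comp; [exact: shift_cont | exact: h_cont].
have [eps eps_gt0 S_gap] := compact_gt_gap _ S_compact h_shift_cont S_gt.
exists (Num.max 1 ((M - h u0) / eps)) => w Cw; rewrite ge_max => /andP[s_ge1].
set s := `|w - u0| in s_ge1 *; rewrite ler_pdivrMr // => s_ge.
have s_gt0 : 0 < s by apply: lt_le_trans ltr01 s_ge1.
have t_ge0 : 0 <= s^-1 by rewrite invr_ge0 ltW.
have t_le1 : s^-1 <= 1 by rewrite invf_le1.
have S_dir : S (s^-1 *: (w - u0)).
  split; last exact: C_segment.
  by rewrite /= normrZ ger0_norm // mulVf // gt_eqF.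
have := lt_le_trans (S_gap _ S_dir)
  (convex_fun_segment w u0 (strictly_convex_fun_convex h_strict) t_ge0 t_le1).
rewrite ltrD2l mulrC ltr_pdivlMr //.
lra.
Qed.

End strictly_convex_minimum.

Section parametric_problem.
Context {R : realType} {n m p : nat}.
Variable f : 'rV[R]_n -> 'rV[R]_m -> R.
Variable g : 'rV[R]_n -> 'rV[R]_m -> 'rV[R]_p.

Lemma feasible_segment {x u v t} :
  (forall i, convex_fun (fun u => g x u 0 i)) ->
  feasible g x u -> feasible g x v -> 0 <= t -> t <= 1 ->
  feasible g x (v + t *: (u - v)).
Proof.
move=> g_conv u_feas v_feas t_ge0 t_le1 i.
apply: le_trans (convex_fun_segment u v (g_conv i) t_ge0 t_le1) _ => /=.
by have := u_feas i; have := v_feas i; nra.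
Qed.

Definition feasible_descent y v d :=
  [/\ feasible g y v, feasible g y (v + d) & f y (v + d) <= f y v].

Lemma minimizer_dist_le {y u v r} : convex_fun (f y) ->
  (forall i, convex_fun (fun u => g y u 0 i)) ->
  is_minimizer f g y u -> feasible g y v -> 0 <= r ->
  (forall d, `|d| = r -> ~ feasible_descent y v d) -> `|u - v| <= r.
Proof.
move=> f_conv g_conv [u_feas u_min] v_feas r_ge0 no_descent.
rewrite leNgt; apply/negP => r_lt; set s := `|u - v| in r_lt.
have s_gt0 : 0 < s by apply: le_lt_trans r_lt.
have t_ge0 : 0 <= r / s by rewrite divr_ge0 // ltW.
have t_le1 : r / s <= 1 by rewrite ler_pdivrMr // mul1r ltW.
apply: (no_descent ((r / s) *: (u - v))).
  by rewrite normrZ ger0_norm // -mulrA mulVf ?mulr1 // gt_eqF.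
split => //; first exact: feasible_segment.
have := convex_fun_segment u v f_conv t_ge0 t_le1.
by have := u_min v v_feas; nra.
Qed.

Lemma locally_bounded_LCF (ustar : 'rV[R]_n -> 'rV[R]_m) x0 :
  (forall y, feasible g y (ustar y)) -> locally_bounded_at ustar x0 -> LCF g x0.
Proof.
move=> ustar_feas [U [/nbhs_ballP [delta delta_gt0 ball_U] [B [_ U_bnd]]]].
exists [set u | `|u| <= B]; split; first exact: compact_norm_le.
exists delta; split => // y y_close; exists (ustar y) => //.
by apply/U_bnd/ball_U; rewrite -ball_normE /= distrC.
Qed.

Hypothesis f_cont : continuous (fun z : 'rV[R]_n * 'rV[R]_m => f z.1 z.2).
Hypothesis g_cont : continuous (fun z : 'rV[R]_n * 'rV[R]_m => g z.1 z.2).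

Lemma closed_feasible_comp {T : topologicalType}
    {phi : T -> 'rV[R]_n * 'rV[R]_m} :
  continuous phi -> closed [set t | feasible g (phi t).1 (phi t).2].
Proof.
move=> phi_cont.
have -> : [set t | feasible g (phi t).1 (phi t).2] =
    \bigcap_(i in [set: 'I_p]) [set t | g (phi t).1 (phi t).2 0 i <= 0].
  by apply/seteqP; split => [t t_feas i _ | t t_feas i]; exact: t_feas.
apply: closed_bigI => i _.
have g_coord_cont : continuous (fun z : 'rV[R]_n * 'rV[R]_m => g z.1 z.2 0 i).
  move=> z; exact: (continuous_comp (g_cont z)
    (@coord_continuous R 1 p 0 i (g z.1 z.2))).
apply: (preimage_closed _ (@closed_le _ 0)) => t _.
exact: (continuous_comp (phi_cont t) (g_coord_cont (phi t))).
Qed.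

Lemma closed_feasible_descent :
  closed [set w : ('rV[R]_m * 'rV[R]_m) * 'rV[R]_n |
          feasible_descent w.2 w.1.1 w.1.2].
Proof.
pose base (w : ('rV[R]_m * 'rV[R]_m) * 'rV[R]_n) := (w.2, w.1.1).
pose moved (w : ('rV[R]_m * 'rV[R]_m) * 'rV[R]_n) := (w.2, w.1.1 + w.1.2).
have base_cont : continuous base.
  by move=> w; exact: (cvg_pair cvg_snd (cvg_comp _ _ cvg_fst cvg_fst)).
have moved_cont : continuous moved.
  move=> w; exact: (cvg_pair cvg_snd
    (cvgD (cvg_comp _ _ cvg_fst cvg_fst) (cvg_comp _ _ cvg_fst cvg_snd))).
have descent_le :
    closed [set w | f (moved w).1 (moved w).2 - f (base w).1 (base w).2 <= 0].
  apply: (preimage_closed _ (@closed_le _ 0)) => w _; apply: continuousB.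
    exact: (continuous_comp (moved_cont w) (f_cont (moved w))).
  exact: (continuous_comp (base_cont w) (f_cont (base w))).
have -> : [set w | feasible_descent w.2 w.1.1 w.1.2] =
    [set w | feasible g (base w).1 (base w).2] `&`
    [set w | feasible g (moved w).1 (moved w).2] `&`
    [set w | f (moved w).1 (moved w).2 - f (base w).1 (base w).2 <= 0].
  by apply/seteqP; split => w /=; rewrite subr_le0; [case | case=> -[]].
apply: closedI descent_le; apply: closedI.
  exact: closed_feasible_comp base_cont.
exact: closed_feasible_comp moved_cont.
Qed.

Hypothesis f_strict : forall x, strictly_convex_fun (f x).
Hypothesis g_conv : forall x i, convex_fun (fun u => g x u 0 i).

Lemma minimizer_no_far_descent {x0 u0 K} :
  is_minimizer f g x0 u0 -> compact K ->
  exists2 r, 0 < r & forall v d, K v -> `|d| = r -> ~ feasible_descent x0 v d.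
Proof.
move=> [u0_feas u0_min] K_compact.
have f_x0_cont : continuous (f x0).
  by move=> u; exact: (continuous_comp (pair_continuous x0 u) (f_cont (x0, u))).
have [M _ fK_bnd] := compact_norm_bound
  (continuous_compact (continuous_subspaceT f_x0_cont) K_compact).
have [Kb Kb_gt0 K_bnd] := compact_norm_bound K_compact.
have [r far_gt] := strictly_convex_min_coercive (f x0) (feasible g x0) u0
  (f_strict x0) (fun u v t => feasible_segment (g_conv x0)) u0_feas u0_min
  f_x0_cont (closed_feasible_comp (pair_continuous x0)) M.
have r_le : r <= Num.max r 0 by rewrite le_max lexx.
have max_ge0 : 0 <= Num.max r 0 by rewrite le_max lexx orbT.
exists (Num.max r 0 + Kb + `|u0| + 1) => [|v d Kv d_norm [_ vd_feas vd_le]].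
  by have := normr_ge0 u0; lra.
have : M < f x0 (v + d).
  apply: far_gt => //.
  have := ler_normD (v + d - u0) (u0 - v); rewrite addrA subrK addrC addKr.
  by have := ler_normB u0 v; have := K_bnd v Kv; lra.
by have := le_trans (ler_norm _) (fK_bnd _ (imageP _ Kv)); lra.
Qed.

Lemma LCF_locally_bounded (ustar : 'rV[R]_n -> 'rV[R]_m) x0 :
  (forall x, is_minimizer f g x (ustar x)) -> LCF g x0 ->
  locally_bounded_at ustar x0.
Proof.
move=> ustar_min [K [K_compact [delta [delta_gt0 K_feas]]]].
have [r r_gt0 no_descent_x0] :=
  minimizer_no_far_descent (ustar_min x0) K_compact.
have [Kb Kb_gt0 K_bnd] := compact_norm_bound K_compact.
have no_descent_near := tube_lemma x0
  (compact_setX K_compact (compact_norm_eq m r)) closed_feasible_descent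
  (fun z '(conj Kz z_norm) => no_descent_x0 _ _ Kz z_norm).
exists ((fun y => forall z, (K `*` [set d | `|d| = r]) z ->
           ~ feasible_descent y z.1 z.2) `&` [set y | `|y - x0| < delta]).
split.
  apply: filterI; first exact: no_descent_near.
  apply/nbhs_ballP; exists delta => // y.
  by rewrite -ball_normE /= distrC.
exists (r + Kb); split => [|y [y_no_descent y_close]]; first exact: addr_gt0.
have [v Kv v_feas] := K_feas y y_close.
have := minimizer_dist_le (strictly_convex_fun_convex (f_strict y))
  (g_conv y) (ustar_min y) v_feas (ltW r_gt0)
  (fun d d_norm => y_no_descent (v, d) (conj Kv d_norm)).
have := ler_normD (ustar y - v) v; rewrite subrK.
by have := K_bnd v Kv; lra.
Qed.

End parametric_problem.

Theorem proposition3p7 (R : realType) (n m p : nat)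
  (f : 'rV[R]_n -> 'rV[R]_m -> R) (g : 'rV[R]_n -> 'rV[R]_m -> 'rV[R]_p)
  (ustar : 'rV[R]_n -> 'rV[R]_m) :
  continuous (fun z : 'rV[R]_n * 'rV[R]_m => f z.1 z.2) ->
  continuous (fun z : 'rV[R]_n * 'rV[R]_m => g z.1 z.2) ->
  (forall x, strictly_convex_fun (f x)) ->
  (forall x (i : 'I_p), convex_fun (fun u => g x u 0 i)) ->
  (forall x, is_minimizer f g x (ustar x)) ->
  forall x0 : 'rV[R]_n, locally_bounded_at ustar x0 <-> LCF g x0.
Proof.
move=> f_cont g_cont f_strict g_conv ustar_min x0; split.
  exact: locally_bounded_LCF (fun y => (ustar_min y).1).
exact: LCF_locally_bounded.
Qed.
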